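(* For all integers $n\ge 1$, $0\le t\le n$ and $k\ge 1$, \[ \frac{\binom{n}{t}}{S(n,t,k)}\;\le\; F(n,t,k)\;\le\;\left\lceil \frac{\binom nt}{S^{+}(n,t,k)}\cdot n\right\rceil. \]
   Context: A CNF formula over variables $x_1,\dots,x_n$ is a conjunction of clauses (disjunctions of literals); a $k$-CNF has all clauses of width at most $k$; it is monotone if all literals are un-negated variables. $\mathrm{THR}_t:\{0,1\}^n\to\{0,1\}$ is defined by $\mathrm{THR}_t(x)=1$ iff $\sum_i x_i\ge t$. $\mathrm{sat}_t(F)$ is the set of satisfying assignments of $F$ of Hamming weight exactly $t$. $F$ is $t$-admissible if it has no satisfying assignment of Hamming weight less than $t$. $S(n,t,k)$ (resp. $S^+(n,t,k)$) is the maximum of $|\mathrm{sat}_t(F)|$ over all $t$-admissible $k$-CNF (resp. monotone $k$-CNF) formulas $F$ on $n$ variables. $F(n,t,k)$ is the smallest $q$ such that $\mathrm{THR}_t=\bigvee_{i=1}^q\psi_i$ as Boolean functions on $\{0,1\}^n$ for some $k$-CNF formulas $\psi_1,\dots,\psi_q$ on $x_1,\dots,x_n$. *)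

From mathcomp Require Import all_boot all_order all_algebra.
Set Implicit Arguments. Unset Strict Implicit. Unset Printing Implicit Defensive.

(* A literal over x_1..x_n is a pair (i, b): b = true means x_i, b = false means ~x_i. *)
Definition lit (n : nat) := ('I_n * bool)%type.
Definition clause (n : nat) := {set lit n}.
Definition cnf (n : nat) := {set clause n}.
Definition assign (n : nat) := {ffun 'I_n -> bool}.

Definition lit_eval n (l : lit n) (x : assign n) : bool := x l.1 == l.2.
Definition clause_eval n (C : clause n) (x : assign n) : bool :=
  [exists l in C, lit_eval l x].
Definition cnf_eval n (F : cnf n) (x : assign n) : bool :=
  [forall C in F, clause_eval C x].

Definition weight n (x : assign n) : nat := \sum_(i < n) (x i : nat).

Definition THR n (t : nat) (x : assign n) : bool := t <= weight x.

Definition is_kcnf n (k : nat) (F : cnf n) : bool := [forall C in F, #|C| <= k].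
Definition monotone n (F : cnf n) : bool := [forall C in F, [forall l in C, l.2]].

Definition sat_t n (t : nat) (F : cnf n) : {set assign n} :=
  [set x | cnf_eval F x && (weight x == t)].

Definition admissible n (t : nat) (F : cnf n) : bool :=
  [forall x : assign n, cnf_eval F x ==> (t <= weight x)].

Definition S (n t k : nat) : nat :=
  \max_(F : cnf n | is_kcnf k F && admissible t F) #|sat_t t F|.

Definition Splus (n t k : nat) : nat :=
  \max_(F : cnf n | [&& is_kcnf k F, monotone F & admissible t F]) #|sat_t t F|.

Definition representable (n t k q : nat) : bool :=
  [exists psi : {ffun 'I_q -> cnf n},
     [forall i, is_kcnf k (psi i)] &&
     [forall x : assign n, THR t x == [exists i, cnf_eval (psi i) x]]].

(* For k >= 1 q = 2^n is always representable
   (one CNF of unit clauses per true point of THR_t, the unsatisfiable CNF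
   {empty clause} otherwise), so the minimum over q <= 2^n is the true minimum. *)
Definition Fnum (n t k : nat) : nat :=
  \big[minn/(2 ^ n).+1]_(q < (2 ^ n).+1 | representable n t k q) (q : nat).

From mathcomp Require Import all_boot all_order all_fingroup all_algebra.
From mathcomp Require Import zify ring lra.
Set Implicit Arguments. Unset Strict Implicit. Unset Printing Implicit Defensive.

Import Order.TTheory GRing.Theory Num.Theory.

(* Lower bound: each disjunct psi_i of a representation of THR_t is
   t-admissible, so it is satisfied by at most S(n,t,k) of the C(n,t) points
   of weight t, and the q disjuncts together must cover all of them.

   Upper bound: let F be a monotone t-admissible k-CNF with S^+(n,t,k)
   satisfying points of weight t, and p = S^+ / C(n,t).  A random permutation
   of the variables maps any fixed point of weight t into sat_t(F) with
   probability p, so some permutation covers a p-fraction of the still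
   uncovered points of weight t.  After q >= n / p such greedy rounds fewer
   than 2^n (1 - p)^q <= 2^n / (1 + p)^q <= 1 points remain, the last step by
   comparing the binomial expansions of (1 + p)^q and 2^n term by term.  The
   disjunction of the q permuted copies of F is THR_t: monotonicity lifts the
   points of weight t to all heavier points, admissibility excludes the
   lighter ones. *)

Lemma count_bool (a : pred bool) (u : seq bool) :
  count a u = a true * count id u + a false * (size u - count id u).
Proof.
rewrite -[in size u](count_predC id u) addKn.
elim: u => [|b u IH] /=; first by rewrite !muln0.
by rewrite IH; case: b; case: (a true); case: (a false) => /=; lia.
Qed.

Section PermuteAssignments.
Variable n : nat.
Implicit Types (x y : assign n) (s r : {perm 'I_n}).

Definition permx x s : assign n := [ffun i => x (s i)].

Lemma permxM x s r : permx (permx x r) s = permx x (s * r)%g.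
Proof. by apply/ffunP=> i; rewrite !ffunE permM. Qed.

Lemma permx1 x : permx x 1%g = x.
Proof. by apply/ffunP=> i; rewrite !ffunE perm1. Qed.

Lemma weightE x : weight x = #|[set i | x i]|.
Proof.
rewrite /weight -sum1_card [RHS]big_mkcond /=; apply: eq_bigr => i _.
by rewrite inE; case: (x i).
Qed.

Lemma weight_permx x s : weight (permx x s) = weight x.
Proof.
rewrite /weight [RHS](reindex_inj (@perm_inj _ s)) /=.
by apply: eq_bigr => i _; rewrite ffunE.
Qed.

Lemma weight_count x : weight x = count id [tuple x i | i < n].
Proof.
rewrite /weight /= count_map -sum1_count big_enum_cond [RHS]big_mkcond /=.
by apply: eq_bigr => i _; case: (x i).
Qed.

Lemma permx_transitive x y : weight x = weight y -> exists s, permx x s = y.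
Proof.
move=> wxy; set tx := [tuple x i | i < n]; set ty := [tuple y i | i < n].
have : perm_eq (tval ty) tx.
  by apply/seq.permP => a; rewrite !(count_bool a) !size_tuple -!weight_count wxy.
case/tuple_permP => p ty_p; exists p; apply/ffunP => i.
have := congr1 (fun u => tnth u i) (val_inj ty_p).
by rewrite !tnth_mktuple ffunE => ->.
Qed.

Lemma exists_weight_below x t : t <= weight x ->
  exists y, weight y = t /\ forall i, y i -> x i.
Proof.
rewrite weightE => /card_geqP[u [uniq_u size_u sub_u]].
exists [ffun i => i \in u]; split.
  by rewrite weightE -size_u -(card_uniqP uniq_u); apply: eq_card => i; rewrite !inE ffunE.
by move=> i; rewrite ffunE => /sub_u; rewrite inE.
Qed.

End PermuteAssignments.

Definition slice n t : {set assign n} := [set x | weight x == t].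

Lemma card_slice n t : #|slice n t| = 'C(n, t).
Proof.
rewrite -[n in 'C(n, _)]card_ord -card_draws.
have support_inj : injective (fun x : assign n => [set i | x i]).
  by move=> x y /setP xy; apply/ffunP => i; have := xy i; rewrite !inE.
rewrite -(card_imset _ support_inj); apply: eq_card => A; rewrite [in RHS]inE.
apply/imsetP/eqP => [[x] | cardA].
  by rewrite inE => /eqP <- ->; rewrite weightE.
exists [ffun i => i \in A]; last by apply/setP => i; rewrite inE ffunE.
by rewrite inE weightE -cardA; apply/eqP/eq_card => i; rewrite !inE ffunE.
Qed.

Lemma card_slice_lt n t : 0 < n -> #|slice n t| < 2 ^ n.
Proof.
move=> n_gt0; have -> : 2 ^ n = #|[set: assign n]|.
  by rewrite cardsT card_ffun card_bool card_ord.
apply: proper_card; rewrite properT; apply/negP => /eqP slice_full.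
have [z] : exists z : assign n, weight z != t.
  have [-> | t_neq0] := eqVneq t 0.
    exists [ffun => true]; rewrite weightE -lt0n.
    by apply/card_gt0P; exists (Ordinal n_gt0); rewrite inE ffunE.
  exists [ffun => false]; rewrite weightE eq_sym.
  apply: contraNneq t_neq0 => ->; rewrite cards_eq0.
  by apply/eqP/setP => i; rewrite !inE ffunE.
move=> /negPf wz_neq; have : z \in slice n t by rewrite slice_full inE.
by rewrite inE wz_neq.
Qed.

Lemma exists_ge_average (I : finType) (f : I -> nat) : 0 < #|I| ->
  exists i, \sum_j f j <= #|I| * f i.
Proof.
move=> I_gt0; have [i max_fi] := bigop.eq_bigmax f I_gt0.
exists i; rewrite -max_fi -sum_nat_const; apply: leq_sum => j _.
exact: leq_bigmax.
Qed.

Section Averaging.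
Variables n t : nat.
Implicit Types (x y a b : assign n) (A B U : {set assign n}).

Lemma card_permx_eq_le x a y b :
    x \in slice n t -> a \in slice n t -> y \in slice n t -> b \in slice n t ->
  #|[set s | permx x s == a]| <= #|[set s | permx y s == b]|.
Proof.
rewrite !inE => /eqP wx /eqP wa /eqP wy /eqP wb.
have [r xr_y] := permx_transitive (etrans wy (esym wx)).
have [r' ar'_b] := permx_transitive (etrans wb (esym wa)).
have conj_inj : injective (fun s => r'^-1 * s * r)%g by move=> u v /mulIg /mulgI.
rewrite -(card_imset _ conj_inj).
apply: subset_leq_card; apply/subsetP => s' /imsetP[s]; rewrite !inE => /eqP xs_a ->.
by rewrite -permxM xr_y -permxM xs_a -ar'_b permxM mulVg permx1.
Qed.

Lemma card_permx_eq x a y b :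
    x \in slice n t -> a \in slice n t -> y \in slice n t -> b \in slice n t ->
  #|[set s | permx x s == a]| = #|[set s | permx y s == b]|.
Proof. by move=> *; apply/eqP; rewrite eqn_leq !card_permx_eq_le. Qed.

Lemma card_permx_in x B : x \in slice n t -> B \subset slice n t ->
  #|[set s | permx x s \in B]| = #|B| * #|[set s | permx x s == x]|.
Proof.
move=> x_in sBW; rewrite -sum1_card (partition_big (permx x) (mem B)) /=; last first.
  by move=> s; rewrite inE.
rewrite -sum_nat_const; apply: eq_bigr => a a_in.
rewrite sum1dep_card -(card_permx_eq x_in (subsetP sBW _ a_in) x_in x_in).
by apply: eq_card => s; rewrite !inE andb_idl // => /eqP ->.
Qed.

Lemma averaging A U : A \subset slice n t -> U \subset slice n t ->
  exists s, #|U| * #|A| <= #|slice n t| * #|[set x in U | permx x s \in A]|.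
Proof.
move=> sAW sUW; have [-> | [x0 x0_in]] := set_0Vmem U.
  by exists 1%g; rewrite cards0.
have x0W := subsetP sUW _ x0_in.
set N := #|[set s | permx x0 s == x0]|.
have N_gt0 : 0 < N by apply/card_gt0P; exists 1%g; rewrite inE permx1.
have card_perm : #|{perm 'I_n}| = #|slice n t| * N.
  rewrite -(card_permx_in x0W (subxx _)) -cardsT; apply: eq_card => s.
  by rewrite !inE weight_permx; move: x0W; rewrite inE.
have sum_hits : \sum_s #|[set x in U | permx x s \in A]| = #|U| * #|A| * N.
  rewrite -mulnA -sum_nat_const.
  transitivity (\sum_(x in U) #|[set s | permx x s \in A]|); last first.
    apply: eq_bigr => x x_in; rewrite (card_permx_in _ sAW) ?(subsetP sUW) //.
    by congr (_ * _); apply: card_permx_eq; rewrite ?(subsetP sUW).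
  under eq_bigr do rewrite -sum1dep_card.
  under [RHS]eq_bigr do rewrite -sum1dep_card.
  rewrite (exchange_big_dep (mem U)) /=; last by move=> s x _ /andP[].
  by apply: eq_bigr => x x_in; apply: eq_bigl => s; rewrite x_in.
have [|s avg_s] := exists_ge_average (fun s => #|[set x in U | permx x s \in A]|).
  by rewrite card_perm muln_gt0 N_gt0 andbT; apply/card_gt0P; exists x0.
by exists s; rewrite -(leq_pmul2r N_gt0) -sum_hits mulnAC -card_perm.
Qed.

End Averaging.

Section Decay.
Local Open Scope ring_scope.
Variables (R : realFieldType) (p : R) (n q : nat).
Hypotheses (p_ge0 : 0 <= p) (p_le1 : p <= 1) (n_le_qp : n%:R <= q%:R * p).

Lemma n_le_q : (n <= q)%N.
Proof. by rewrite -(ler_nat R); apply: le_trans n_le_qp _; rewrite ler_piMr. Qed.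

(* The induction step uses [(q - i) p >= n - i]. *)
Lemma bin_le_binXp i : (i <= n)%N -> 'C(n, i)%:R <= 'C(q, i)%:R * p ^+ i.
Proof.
elim: i => [|i IH] i_lt_n; first by rewrite !bin0 expr0 mulr1.
have i_le_n := ltnW i_lt_n; have i_le_q := leq_trans i_le_n n_le_q.
rewrite -(ler_pM2l (ltr0Sn R i)) -natrM mul_bin_left mulrA -natrM mul_bin_left.
rewrite !natrM exprS mulrACA.
apply: ler_pM; rewrite ?ler0n ?IH // !natrB // mulrBl.
by apply: lerB; rewrite // ler_piMr ?ler0n.
Qed.

Lemma exp2_le_exp1D : 2 ^+ n <= (1 + p) ^+ q.
Proof.
rewrite -[2]/(1 + 1) !exprDn.
rewrite (big_ord_widen q.+1 (fun i => (1 ^+ (n - i) * 1 ^+ i) *+ 'C(n, i)));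
  last by rewrite ltnS n_le_q.
rewrite [X in _ <= X](bigID (fun i : 'I_q.+1 => (i < n.+1)%N)) /= -[X in X <= _]addr0.
apply: lerD.
  apply: ler_sum => i i_lt_n; rewrite !expr1n !mul1r -[p ^+ i *+ _]mulr_natl.
  exact: bin_le_binXp.
by apply: sumr_ge0 => i _; rewrite expr1n mul1r mulrn_wge0 ?exprn_ge0.
Qed.

Lemma card_mul_exp1B_lt1 (C : nat) : (C < 2 ^ n)%N -> C%:R * (1 - p) ^+ q < 1.
Proof.
move=> C_lt; have decay_ge0 : 0 <= (1 - p) ^+ q by rewrite exprn_ge0 ?subr_ge0.
have decay_le : (1 - p) ^+ q * (1 + p) ^+ q <= 1.
  rewrite -exprMn exprn_ile1 //.
    by rewrite mulr_ge0 // ?subr_ge0 // addr_ge0.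
  by rewrite mulrDr mulr1 mulrBl mul1r addrA subrK lerBlDr lerDl mulr_ge0.
have C1_le : C%:R + 1 <= (1 + p) ^+ q.
  by apply: le_trans exp2_le_exp1D; move: C_lt; rewrite -(ler_nat R) natrX -natr1.
have : (C%:R + 1) * (1 - p) ^+ q <= 1.
  by apply: le_trans decay_le; rewrite mulrC ler_wpM2l.
move: decay_ge0; rewrite le0r => /orP[/eqP -> _ | decay_gt0]; first by rewrite mulr0 ltr01.
by rewrite mulrDl mul1r; lra.
Qed.

End Decay.

Section GreedyCover.
Local Open Scope ring_scope.
Variables (n t : nat) (A : {set assign n}).
Hypotheses (sAW : A \subset slice n t) (W_gt0 : (0 < #|slice n t|)%N).
Let p : rat := #|A|%:R / #|slice n t|%:R.

Definition uncovered (ss : seq {perm 'I_n}) :=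
  [set x in slice n t | all (fun s => permx x s \notin A) ss].

Lemma density_ge0_le1 : 0 <= p <= 1.
Proof.
rewrite divr_ge0 ?ler0n //= ler_pdivrMr ?ltr0n // mul1r ler_nat.
exact: subset_leq_card.
Qed.

Lemma greedy_uncovered m : exists ss, size ss = m /\
  #|uncovered ss|%:R <= #|slice n t|%:R * (1 - p) ^+ m.
Proof.
have /andP[p_ge0 p_le1] := density_ge0_le1.
elim: m => [|m [ss [size_ss uncov_le]]].
  exists [::]; split => //; rewrite expr0 mulr1 ler_nat subset_leq_card //.
  by apply/subsetP => x; rewrite inE => /andP[].
set U := uncovered ss.
have sUW : U \subset slice n t by apply/subsetP => x; rewrite inE => /andP[].
have [s hit_s] := averaging sAW sUW.
exists (s :: ss); split; first by rewrite /= size_ss.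
set P := [set x | permx x s \in A].
have -> : uncovered (s :: ss) = U :\: P.
  by apply/setP => x; rewrite !inE /= andbCA andbA.
have UP_eq : [set x in U | permx x s \in A] = U :&: P by apply/setP => x; rewrite !inE.
move: hit_s; rewrite UP_eq -(ler_nat rat) !natrM => hit_s.
have UP_ge : #|U|%:R * p <= #|U :&: P|%:R.
  by rewrite mulrA ler_pdivrMr ?ltr0n // [X in _ <= X]mulrC.
have : #|U :\: P|%:R = #|U|%:R - #|U :&: P|%:R :> rat.
  by rewrite -(cardsID P U) natrD addrC addKr.
move=> ->; rewrite exprSr mulrA.
apply: le_trans (ler_wpM2r _ uncov_le); last by rewrite subr_ge0.
by rewrite mulrBr mulr1 lerB.
Qed.

Lemma exists_cover q : (0 < n)%N -> n%:R <= q%:R * p ->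
  exists2 ss : seq {perm 'I_n}, size ss = q &
    forall y, y \in slice n t -> has (fun s => permx y s \in A) ss.
Proof.
move=> n_gt0 n_le_qp; have /andP[p_ge0 p_le1] := density_ge0_le1.
have [ss [size_ss uncov_le]] := greedy_uncovered q.
have uncov_lt := card_mul_exp1B_lt1 p_ge0 p_le1 n_le_qp (card_slice_lt t n_gt0).
have uncov0 : uncovered ss = set0.
  apply/eqP; rewrite -cards_eq0 -leqn0 -ltnS -(ltr_nat rat).
  exact: le_lt_trans uncov_le uncov_lt.
exists ss => // y y_in; apply: contraT; rewrite -all_predC => no_hit.
have : y \in uncovered ss by rewrite inE y_in.
by rewrite uncov0 inE.
Qed.

End GreedyCover.

Section PermuteFormulas.
Variable n : nat.
Implicit Types (x : assign n) (s : {perm 'I_n}) (F : cnf n).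

Definition perm_lit s (l : lit n) : lit n := (s l.1, l.2).
Definition perm_clause s (C : clause n) : clause n := perm_lit s @: C.
Definition perm_cnf s F : cnf n := perm_clause s @: F.

Lemma perm_lit_inj s : injective (perm_lit s).
Proof. by move=> [i b] [j c] [/perm_inj -> ->]. Qed.

Lemma clause_eval_perm s C x : clause_eval (perm_clause s C) x = clause_eval C (permx x s).
Proof.
apply/existsP/existsP => [[l' /andP[/imsetP[l l_in ->] l_true]] | [l /andP[l_in l_true]]].
  by exists l; rewrite l_in /lit_eval /= ffunE.
by exists (perm_lit s l); rewrite imset_f //= /lit_eval /= -(ffunE (fun i => x (s i))).
Qed.

Lemma cnf_eval_perm s F x : cnf_eval (perm_cnf s F) x = cnf_eval F (permx x s).
Proof.
apply/forallP/forallP => sat_all C.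
  apply/implyP => C_in; have := sat_all (perm_clause s C).
  by rewrite imset_f // clause_eval_perm.
apply/implyP => /imsetP[C' C'_in ->]; rewrite clause_eval_perm.
by have := sat_all C'; rewrite C'_in.
Qed.

Lemma kcnf_perm s k F : is_kcnf k F -> is_kcnf k (perm_cnf s F).
Proof.
move=> /forallP kF; apply/forallP => C'; apply/implyP => /imsetP[C C_in ->].
by rewrite card_imset; [have := kF C; rewrite C_in | exact: perm_lit_inj].
Qed.

Lemma monotone_cnf_eval F x y : monotone F -> cnf_eval F y ->
  (forall i, y i -> x i) -> cnf_eval F x.
Proof.
move=> /forallP mono_F /forallP sat_y y_le_x; apply/forallP => C.
apply/implyP => C_in; have /existsP[l /andP[l_in l_true]] := implyP (sat_y C) C_in.
apply/existsP; exists l; rewrite l_in.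
have /forallP/(_ l) := implyP (mono_F C) C_in; rewrite l_in /= => pos_l.
by move: l_true; rewrite /lit_eval pos_l => /eqP/y_le_x ->.
Qed.

End PermuteFormulas.

Lemma representable_cover n t k F (ss : seq {perm 'I_n}) :
    is_kcnf k F -> monotone F -> admissible t F ->
    (forall y, y \in slice n t -> has (fun s => permx y s \in sat_t t F) ss) ->
  representable n t k (size ss).
Proof.
move=> kF mono_F adm_F cover; apply/existsP.
exists [ffun i : 'I_(size ss) => perm_cnf (nth 1%g ss i) F]; apply/andP; split.
  by apply/forallP => i; rewrite ffunE kcnf_perm.
apply/forallP => x; apply/eqP.
apply/idP/existsP => [/exists_weight_below[y [wy y_le_x]] | [i]].
  have /cover/hasP[s s_in] : y \in slice n t by rewrite inE wy.
  rewrite inE => /andP[sat_ys _]; have s_idx : index s ss < size ss by rewrite index_mem.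
  exists (Ordinal s_idx).
  rewrite ffunE cnf_eval_perm nth_index //.
  by apply: monotone_cnf_eval mono_F sat_ys _ => j; rewrite !ffunE => /y_le_x.
by rewrite ffunE cnf_eval_perm => /(implyP (forallP adm_F _)); rewrite weight_permx.
Qed.

Lemma bigmin_le (I : eqType) (r : seq I) (P : pred I) (F : I -> nat) N i :
  i \in r -> P i -> \big[minn/N]_(j <- r | P j) F j <= F i.
Proof.
elim: r => //= a r IH; rewrite inE big_cons => /orP[/eqP <- | i_in] Pi.
  by rewrite Pi geq_minl.
by case: (P a); rewrite ?geq_min IH ?orbT.
Qed.

Lemma Fnum_le n t k q : representable n t k q -> Fnum n t k <= q.
Proof.
move=> rep_q; rewrite /Fnum; have [q_small | q_big] := leqP q (2 ^ n).
  have q_lt : q < (2 ^ n).+1 by [].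
  exact: (bigmin_le val _ (mem_index_enum (Ordinal q_lt)) rep_q).
apply: leq_trans q_big.
by apply: (big_ind (fun m => m <= (2 ^ n).+1)) => // [a b a_le _ | i _];
  rewrite ?geq_min ?a_le // ltnW.
Qed.

Lemma Fnum_spec n t k :
  Fnum n t k = (2 ^ n).+1 \/ representable n t k (Fnum n t k).
Proof.
apply: (big_ind (fun m => m = (2 ^ n).+1 \/ representable n t k m)) => [| a b | i]; auto.
by case: (leqP a b).
Qed.

Lemma card_bigcup_le (I T : finType) (A : I -> {set T}) :
  #|\bigcup_i A i| <= \sum_i #|A i|.
Proof.
elim/big_rec2: _ => [|i m U _ U_le]; first by rewrite cards0.
by apply: leq_trans (leq_card_setU _ _) _; rewrite leq_add2l.
Qed.

Lemma bin_le_mul_S n t k q : representable n t k q -> 'C(n, t) <= q * S n t k.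
Proof.
case/existsP => psi /andP[/forallP kpsi /forallP thr_psi].
have adm_psi i : admissible t (psi i).
  apply/forallP => x; apply/implyP => sat_x.
  by rewrite -/(THR t x) (eqP (thr_psi x)); apply/existsP; exists i.
have sat_le_S i : #|sat_t t (psi i)| <= S n t k.
  by apply: leq_bigmax_cond; rewrite kpsi adm_psi.
have slice_sub : slice n t \subset \bigcup_i sat_t t (psi i).
  apply/subsetP => x; rewrite inE => /eqP wx.
  have /eqP := thr_psi x; rewrite /THR wx leqnn => /esym/existsP[i sat_x].
  by apply/bigcupP; exists i => //; rewrite inE sat_x wx eqxx.
rewrite -card_slice -[q in q * _]card_ord -sum_nat_const.
apply: leq_trans (subset_leq_card slice_sub) (leq_trans (card_bigcup_le _) _).
exact: leq_sum.
Qed.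

Lemma bin_le_Fnum_mul_S n t k : 0 < n -> 0 < S n t k ->
  'C(n, t) <= Fnum n t k * S n t k.
Proof.
(* When no q <= 2^n works, Fnum takes its default value 2^n + 1. *)
move=> n_gt0 S_gt0; have [-> | rep_Fnum] := Fnum_spec n t k; last exact: bin_le_mul_S.
rewrite -card_slice (leq_trans (ltnW (card_slice_lt t n_gt0))) //.
exact: leq_trans (leqnSn _) (leq_pmulr _ S_gt0).
Qed.

Definition prefix_cnf n t : cnf n := [set [set ((i, true) : lit n)] | i : 'I_n & i < t].

Lemma card_ord_lt n t : t <= n -> #|[set i : 'I_n | i < t]| = t.
Proof.
move=> t_le_n; have widen_inj : injective (widen_ord t_le_n).
  by move=> i j /(congr1 val) /= /val_inj.
rewrite -[RHS]card_ord -(card_imset _ widen_inj); apply: eq_card => i.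
rewrite inE; apply/idP/imsetP => [i_lt | [j _ ->]]; last exact: (ltn_ord j).
by exists (Ordinal i_lt) => //; apply: val_inj.
Qed.

Lemma cnf_eval_prefix n t x :
  cnf_eval (prefix_cnf n t) x = ([set i : 'I_n | i < t] \subset [set i | x i]).
Proof.
apply/forallP/subsetP => [sat_x i i_lt | sub_x C].
  have := implyP (sat_x [set (i, true)]) (imset_f _ i_lt).
  by case/existsP => l /andP[/set1P -> /eqP xi]; rewrite inE xi.
apply/implyP => /imsetP[i i_lt ->]; apply/existsP; exists (i, true).
by rewrite set11 /lit_eval /= eqb_id; have := sub_x i i_lt; rewrite inE.
Qed.

Lemma prefix_cnf_admissible n t k : t <= n -> 0 < k ->
  [&& is_kcnf k (prefix_cnf n t), monotone (prefix_cnf n t)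
    & admissible t (prefix_cnf n t)].
Proof.
move=> t_le_n k_gt0; apply/and3P; split.
- by apply/forallP => C; apply/implyP => /imsetP[i _ ->]; rewrite cards1.
- apply/forallP => C; apply/implyP => /imsetP[i _ ->].
  by apply/forallP => l; apply/implyP => /set1P ->.
- apply/forallP => x; apply/implyP; rewrite cnf_eval_prefix weightE.
  by move=> /subset_leq_card; rewrite card_ord_lt.
Qed.

Lemma sat_prefix_cnf_gt0 n t : t <= n -> 0 < #|sat_t t (prefix_cnf n t)|.
Proof.
move=> t_le_n; apply/card_gt0P; exists [ffun i : 'I_n => i < t].
rewrite inE cnf_eval_prefix weightE.
have -> : [set i | [ffun i : 'I_n => i < t] i] = [set i : 'I_n | i < t].
  by apply/setP => i; rewrite !inE ffunE.
by rewrite subxx card_ord_lt ?eqxx.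
Qed.

Lemma Splus_attained n t k : t <= n -> 0 < k ->
  exists2 F : cnf n, [&& is_kcnf k F, monotone F & admissible t F] &
    #|sat_t t F| = Splus n t k /\ 0 < Splus n t k.
Proof.
move=> t_le_n k_gt0; have prefix_ok := prefix_cnf_admissible t_le_n k_gt0.
pose ok := [pred F : cnf n | [&& is_kcnf k F, monotone F & admissible t F]].
have ok_gt0 : 0 < #|ok| by apply/card_gt0P; exists (prefix_cnf n t).
have [F F_ok F_max] := bigop.eq_bigmax_cond (fun F : cnf n => #|sat_t t F|) ok_gt0.
exists F => //; split; first by rewrite -F_max.
apply: leq_trans (sat_prefix_cnf_gt0 t_le_n) _.
exact: (@leq_bigmax_cond _ ok (fun G => #|sat_t t G|) _ prefix_ok).
Qed.

Lemma Fnum_le_cover n t k (F : cnf n) q : 0 < n -> t <= n ->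
    is_kcnf k F -> monotone F -> admissible t F ->
    (n%:R <= q%:R * (#|sat_t t F|%:R / 'C(n, t)%:R) :> rat)%R ->
  Fnum n t k <= q.
Proof.
move=> n_gt0 t_le_n kF mono_F adm_F; rewrite -card_slice => n_le_qp.
have sat_sub : sat_t t F \subset slice n t.
  by apply/subsetP => x; rewrite !inE => /andP[].
have W_gt0 : 0 < #|slice n t| by rewrite card_slice bin_gt0.
have [ss size_ss cover] := exists_cover sat_sub W_gt0 n_gt0 n_le_qp.
by rewrite -size_ss; apply/Fnum_le/(representable_cover kF mono_F adm_F cover).
Qed.

Local Open Scope ring_scope.

Theorem mainTheorem3 (n t k : nat) :
  (1 <= n)%N -> (t <= n)%N -> (1 <= k)%N ->
  ('C(n, t)%:R / (S n t k)%:R <= (Fnum n t k)%:R :> rat) /\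
  ((Fnum n t k)%:Z <= Num.ceil ('C(n, t)%:R / (Splus n t k)%:R * n%:R : rat)).
Proof.
move=> n_gt0 t_le_n k_gt0; split.
  have [-> | S_gt0] := posnP (S n t k); first by rewrite invr0 mulr0.
  by rewrite ler_pdivrMr ?ltr0n // -natrM ler_nat bin_le_Fnum_mul_S.
have [F /and3P[kF mono_F adm_F] [sat_F Splus_gt0]] := Splus_attained t_le_n k_gt0.
set x : rat := _ * n%:R.
have x_ge0 : 0 <= x by rewrite mulr_ge0 ?divr_ge0.
rewrite -[Num.ceil x]gez0_abs ?ceil_ge0 ?lez_nat; last exact: lt_le_trans x_ge0.
apply: (Fnum_le_cover n_gt0 t_le_n kF mono_F adm_F).
have x_le : x <= `|Num.ceil x|%N%:R.
  by rewrite natr_absz ger0_norm ?ceil_ge0 ?ceil_ge // (lt_le_trans _ x_ge0).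
rewrite sat_F; apply: le_trans (ler_wpM2r _ x_le); last by rewrite divr_ge0.
have [S_neq0 C_neq0] : (Splus n t k)%:R != 0 :> rat /\ 'C(n, t)%:R != 0 :> rat.
  by rewrite !pnatr_eq0 -!lt0n Splus_gt0 bin_gt0.
suff -> : x * ((Splus n t k)%:R / 'C(n, t)%:R) = n%:R by [].
by rewrite /x; field; rewrite C_neq0.
Qed.
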